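(* Let $p,q$ be positive integers, with notation as in the context, and let $s$ be the integer with $T_{e_s}=2^sT_1$. Let $T_c$ be a positive integer which is either $1$ or of the form $T_c=2^{l_c}T_1$ with $0\le l_c\le s+1$, and define $$e_0=\begin{cases}\max(e_p,e_q) & \text{if } T_c=1;\\ e_{s,g}+1 & \text{if } l_c=0,\ T_1\ne 1;\\ e_{s,g}+2l_c-1 & \text{if } 1\le l_c\le s+1.\end{cases}$$ Then for every integer $e>e_0$, every point $(x,y)$ lying on a cycle of length $T_c$ of the Cat map over $\mathbb{Z}_{2^e}$ satisfies $x\equiv 0\pmod 2$ and $y\equiv 0\pmod 2$.
   Context: Let $\mathbf{C}=\begin{bmatrix}1 & p\\ q & 1+pq\end{bmatrix}$. The Cat map over $\mathbb{Z}_{2^e}$ is the bijection $v\mapsto \mathbf{C}v\bmod 2^e$ of $\mathbb{Z}_{2^e}^2$; a point lies on a cycle of length $n$ if $n$ is the least positive integer with $\mathbf{C}^n v\equiv v\pmod{2^e}$. $T_e$ denotes the least period of the Cat map over $\mathbb{Z}_{2^e}$ (least $n\ge1$ with $\mathbf{C}^n\equiv I\pmod{2^e}$). Put $A=pq+2$, $B=\sqrt{A^2-4}$, $G_n=\left(\frac{A+B}{2}\right)^n+\left(\frac{A-B}{2}\right)^n$, $H_n=\frac{1}{B}\left(\left(\frac{A+B}{2}\right)^n-\left(\frac{A-B}{2}\right)^n\right)$ (integers). For a nonzero integer $m$ let $v_2(m)$ be the largest $x$ with $2^x\mid m$. Let $e_p=v_2(p)$, $e_q=v_2(q)$; $T_1=3$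 if $p,q$ are both odd, $T_1=2$ if exactly one of $p,q$ is odd, $T_1=1$ if both are even; $\hat h=-1$ if $e_p+e_q=0$ and $\hat h=\min(e_p,e_q)$ otherwise; $e_{s,h}=v_2(H_{T_1})$; $m_0=1$ if $\frac12 G_{T_1}\not\equiv 1\pmod 4$ and $m_0=0$ otherwise; $e_{s,g}=v_2\left(\frac12 G_{2^{m_0}T_1}-1\right)$; $x_0=e_{s,h}+m_0+\hat h-e_{s,g}$ if $e_{s,g}<e_{s,h}+m_0+\hat h$ and $x_0=0$ otherwise; and $e_s=e_{s,h}+m_0+\hat h+x_0$. The cases defining $e_0$ are read in order. *)

From mathcomp Require Import all_boot all_order all_algebra.
Set Implicit Arguments. Unset Strict Implicit. Unset Printing Implicit Defensive.
Import Order.TTheory GRing.Theory Num.Theory.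
Local Open Scope ring_scope.

Definition catC (p q : int) : 'M[int]_2 :=
  \matrix_(i < 2, j < 2)
    if (i : nat) == 0%N then (if (j : nat) == 0%N then 1 else p)
    else (if (j : nat) == 0%N then q else 1 + p * q).

Definition vec2 (x y : int) : 'cV[int]_2 :=
  \col_(i < 2) (if (i : nat) == 0%N then x else y).

Definition mod2e (e : nat) : int := (2 ^ e)%N%:Z.

Definition eqmodv (e : nat) (u v : 'cV[int]_2) : Prop :=
  forall i : 'I_2, (u i ord0 = v i ord0 %[mod mod2e e])%Z.

Definition eqmodm (e : nat) (M N : 'M[int]_2) : Prop :=
  forall i j : 'I_2, (M i j = N i j %[mod mod2e e])%Z.

Definition on_cycle (p q : int) (e : nat) (v : 'cV[int]_2) (n : nat) : Prop :=
  [/\ (0 < n)%N, eqmodv e (catC p q ^+ n *m v) v &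
      forall m : nat, (0 < m < n)%N -> ~ eqmodv e (catC p q ^+ m *m v) v].

Definition least_period (p q : int) (e : nat) (n : nat) : Prop :=
  [/\ (0 < n)%N, eqmodm e (catC p q ^+ n) 1 &
      forall m : nat, (0 < m < n)%N -> ~ eqmodm e (catC p q ^+ m) 1].

(* G_n and H_n (Lucas-type sequences with trace A), via their recurrences:
   G_0 = 2, G_1 = A, H_0 = 0, H_1 = 1, X_{n+2} = A X_{n+1} - X_n. *)
Fixpoint Gseq (A : int) (n : nat) : int :=
  match n with
  | 0 => 2
  | 1 => A
  | S ((S m) as k) => A * Gseq A k - Gseq A m
  end.

Fixpoint Hseq (A : int) (n : nat) : int :=
  match n with
  | 0 => 0
  | 1 => 1
  | S ((S m) as k) => A * Hseq A k - Hseq A m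
  end.

Definition v2 (m : int) : nat := logn 2 `|m|%N.

Section Params.
Variables p q : nat.

Definition Acat : int := (p * q + 2)%N%:Z.
Definition e_p : nat := logn 2 p.
Definition e_q : nat := logn 2 q.
Definition T1 : nat :=
  if odd p && odd q then 3 else if odd p || odd q then 2 else 1.
Definition hhat : int :=
  if (e_p + e_q == 0)%N then -1 else (minn e_p e_q)%:Z.
Definition e_sh : nat := v2 (Hseq Acat T1).
Definition m0 : nat :=
  if modz (divz (Gseq Acat T1) 2) 4 != 1 then 1 else 0.
Definition e_sg : nat := v2 (divz (Gseq Acat (2 ^ m0 * T1)) 2 - 1).
Definition e_base : int := e_sh%:Z + m0%:Z + hhat.
Definition x0 : int := if e_sg%:Z < e_base then e_base - e_sg%:Z else 0.
Definition e_s : int := e_base + x0.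

(* e_0, cases read in order *)
Definition e_0 (Tc lc : nat) : int :=
  if Tc == 1%N then (maxn e_p e_q)%:Z
  else if lc == 0%N then e_sg%:Z + 1
  else e_sg%:Z + 2 * lc%:Z - 1.
End Params.

From mathcomp Require Import all_boot all_order all_algebra.
From mathcomp Require Import ring zify.
Import Order.TTheory GRing.Theory Num.Theory.
Local Open Scope ring_scope.
Set Implicit Arguments. Unset Strict Implicit. Unset Printing Implicit Defensive.

(* Suppose v has an odd coordinate. If Tc = 1, then 2^e divides p y and q x,
   so e <= max(e_p, e_q). Otherwise C^T1 = 1 mod 2, and squaring gives
   C^(2^l T1) = 1 + 2^(l+1) M. Cancelling the odd coordinate through the
   adjugate of M gives 2^e | 2^(l+1) det M, and since det C = 1,
   G_n - 2 = - det (C^n - 1) = - 4^(l+1) det M; hence 2^(e+l+1) divides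
   G_(2^l T1) - 2. Conversely G_(2n) - 2 = (G_n - 2)(G_n + 2), so once the
   2-adic valuation of G_n - 2 is at least 3 each doubling raises it by exactly
   2; this caps v2 (G_(2^l T1) - 2) at e_sg + 2 l + 1, contradicting e > e_0. *)

Section Matrix22.
Variable R : comPzRingType.
Implicit Types X Y : 'M[R]_2.

Lemma ord2P (i : 'I_2) : i = 0 \/ i = 1.
Proof. by case: i => [[|[|//]]] ?; [left | right]; apply: val_inj. Qed.

Lemma matrix22P X Y :
  X 0 0 = Y 0 0 -> X 0 1 = Y 0 1 -> X 1 0 = Y 1 0 -> X 1 1 = Y 1 1 -> X = Y.
Proof.
move=> e00 e01 e10 e11; apply/matrixP => i j.
by case: (ord2P i) => ->; case: (ord2P j) => ->.
Qed.

Lemma sum_ord2 (F : 'I_2 -> R) : \sum_(i < 2) F i = F 0 + F 1.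
Proof.
rewrite !big_ord_recl big_ord0 addr0; congr (_ + F _).
exact: val_inj.
Qed.

Lemma mulmx22E m n (X : 'M[R]_(m, 2)) (Y : 'M[R]_(2, n)) i j :
  (X *m Y) i j = X i 0 * Y 0 j + X i 1 * Y 1 j.
Proof. by rewrite mxE sum_ord2. Qed.

Lemma mxtrace22 X : \tr X = X 0 0 + X 1 1.
Proof. by rewrite /mxtrace sum_ord2. Qed.

Lemma det_mx22 X : \det X = X 0 0 * X 1 1 - X 0 1 * X 1 0.
Proof.
rewrite (expand_det_row _ 0) !big_ord_recl big_ord0 addr0 /cofactor !det_mx11.
rewrite !mxE /= expr0 expr1 mul1r mulN1r mulrN.
by congr (_ * _ - _ * _); congr (X _ _); apply: val_inj.
Qed.

Lemma Cayley_Hamilton22 X : X ^+ 2 = \tr X *: X - (\det X)%:M.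
Proof.
rewrite mxtrace22 det_mx22 expr2 -mulmxE.
by apply: matrix22P; rewrite !mulmx22E !mxE /=; ring.
Qed.

Lemma det_subr1_mx22 X : \det (X - 1) = \det X - \tr X + 1.
Proof. by rewrite !det_mx22 mxtrace22 !mxE /=; ring. Qed.

Lemma det_exp X n : \det (X ^+ n) = \det X ^+ n.
Proof.
elim: n => [|n IHn]; first by rewrite !expr0 det1.
by rewrite !exprS -mulmxE detM IHn.
Qed.

End Matrix22.

Lemma det_catC (p q : int) : \det (catC p q) = 1.
Proof. by rewrite det_mx22 !mxE /=; ring. Qed.

Lemma mxtrace_catC (p q : int) : \tr (catC p q) = p * q + 2.
Proof. by rewrite mxtrace22 !mxE /=; ring. Qed.

Lemma mxtrace_exp_Gseq (X : 'M[int]_2) n :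
  \det X = 1 -> \tr (X ^+ n) = Gseq (\tr X) n.
Proof.
move=> detX1.
have XSS m : X ^+ m.+2 = \tr X *: X ^+ m.+1 - X ^+ m.
  rewrite -[m.+2]addn2 exprD Cayley_Hamilton22 detX1.
  by rewrite mulrBr mulr1 -scalerAr -exprSr.
suff: \tr (X ^+ n) = Gseq (\tr X) n /\ \tr (X ^+ n.+1) = Gseq (\tr X) n.+1 by case.
elim: n => [|n [IHn IHn1]]; first by rewrite expr0 expr1 mxtrace1.
by split=> //; rewrite XSS linearB linearZ /= IHn IHn1.
Qed.

Lemma Gseq_double (A : int) n : Gseq A (n * 2) = Gseq A n ^+ 2 - 2.
Proof.
have := mxtrace_catC 1 (A - 2); rewrite mul1r subrK => <-.
rewrite -!mxtrace_exp_Gseq ?det_catC // exprM Cayley_Hamilton22.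
by rewrite det_exp det_catC expr1n linearB linearZ /= mxtrace1 expr2.
Qed.

Lemma Gseq_gt2 (A : int) n : 2 < A -> (0 < n)%N -> 2 < Gseq A n.
Proof.
move=> A_gt2; case: n => [//|n] _.
suff /andP[] : 2 <= Gseq A n < Gseq A n.+1 by lia.
elim: n => [|n /andP[IHn IHn1]] /=; first lia.
case: n IHn IHn1 => [|n] /=; nia.
Qed.

Lemma dvdz_det_mulmx n (d : int) (M : 'M[int]_n) (w : 'cV[int]_n) :
  (forall i, (d %| (M *m w) i ord0)%Z) -> forall i, (d %| \det M * w i ord0)%Z.
Proof.
move=> dvd_Mw i.
have <- : (\adj M *m (M *m w)) i 0 = \det M * w i 0.
  by rewrite mulmxA mul_adj_mx mul_scalar_mx mxE.
by rewrite mxE; apply: rpred_sum => j _; apply: dvdz_mull.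
Qed.

Lemma v2M (a b : int) : a != 0 -> b != 0 -> v2 (a * b) = (v2 a + v2 b)%N.
Proof. by move=> a0 b0; rewrite /v2 abszM lognM ?absz_gt0. Qed.

Lemma dvdz_v2 (a : int) n : a != 0 -> (2 ^+ n %| a)%Z = (n <= v2 a)%N.
Proof. by move=> a0; rewrite dvdzE abszX pfactor_dvdn ?absz_gt0. Qed.

Lemma dvdz_pow2_odd (e : nat) (a x : int) :
  ~~ (2 %| x)%Z -> (2 ^+ e %| a * x)%Z -> (2 ^+ e %| a)%Z.
Proof.
move=> x_odd; case: e => [|e]; first by rewrite expr0 !dvd1z.
rewrite Gauss_dvdzl // coprimez_sym coprimez_pexpr //.
rewrite coprimez_sym; move: x_odd.
by rewrite dvdzE dvdn2 negbK /coprimez /gcdz -coprime2n.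
Qed.

Section LucasValuation.
Variable A : int.
Hypothesis A_gt2 : 2 < A.

Lemma Gseq_sub2_neq0 n : (0 < n)%N -> Gseq A n - 2 != 0.
Proof. by move=> n_gt0; have := Gseq_gt2 A_gt2 n_gt0; lia. Qed.

Lemma Gseq_double_sub2 n :
  Gseq A (n * 2) - 2 = (Gseq A n - 2) * (Gseq A n + 2).
Proof. by rewrite Gseq_double; ring. Qed.

Lemma v2_Gseq_double_ge n : (0 < n)%N ->
  (v2 (Gseq A n - 2) <= v2 (Gseq A (n * 2) - 2))%N.
Proof.
move=> n_gt0; have := Gseq_gt2 A_gt2 n_gt0 => G_gt2.
by rewrite Gseq_double_sub2 v2M ?leq_addr //; lia.
Qed.

Lemma v2_Gseq_double n : (0 < n)%N -> (2 ^+ 3 %| Gseq A n - 2)%Z ->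
  v2 (Gseq A (n * 2) - 2) = (v2 (Gseq A n - 2) + 2)%N.
Proof.
move=> n_gt0 dvd8; have := Gseq_gt2 A_gt2 n_gt0 => G_gt2.
have Gp2_neq0 : Gseq A n + 2 != 0 by lia.
have addG4 : Gseq A n + 2 = (Gseq A n - 2) + 4 by ring.
have dvd4 : (2 ^+ 2 %| Gseq A n + 2)%Z.
  by rewrite addG4 rpredD // (dvdz_trans _ dvd8).
have ndvd8 : ~~ (2 ^+ 3 %| Gseq A n + 2)%Z.
  apply/negP => /(rpredB dvd8).
  by have -> : Gseq A n - 2 - (Gseq A n + 2) = - 4 by ring.
move: dvd4 ndvd8; rewrite !dvdz_v2 // -leqNgt => le2 le3.
rewrite Gseq_double_sub2 v2M ?Gseq_sub2_neq0 //; lia.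
Qed.

End LucasValuation.

Lemma mod2eE e : mod2e e = 2 ^+ e.
Proof. by rewrite /mod2e -natz natrX. Qed.

Lemma parityz (n : nat) : n%:Z = 2 * (n./2)%:Z + (odd n)%:Z.
Proof. by rewrite -{1}(odd_double_half n) PoszD -muln2 PoszM addrC mulrC. Qed.

Lemma even_mx m n (X : 'M[int]_(m, n)) :
  (forall i j, (2 %| X i j)%Z) -> X = 2 *: map_mx (fun z => z %/ 2)%Z X.
Proof. by move=> X_even; apply/matrixP => i j; rewrite !mxE mulrC divzK. Qed.

Lemma sqr_one_add_scale22 (M : 'M[int]_2) l :
  (1 + 2 ^+ l.+1 *: M) ^+ 2 = 1 + 2 ^+ l.+2 *: (M + 2 ^+ l *: M ^+ 2).
Proof.
rewrite !expr2 -!mulmxE.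
by apply: matrix22P; rewrite !mulmx22E !mxE /= !sum_ord2 !exprS; ring.
Qed.

Lemma trace_sub2_det22 (X M : 'M[int]_2) c :
  \det X = 1 -> X = 1 + c *: M -> \tr X - 2 = - (c ^+ 2 * \det M).
Proof.
move=> detX1 XE; have := det_subr1_mx22 X.
by rewrite {1}XE addrC addKr detZ detX1 => ->; ring.
Qed.

Lemma cycle_dvdz_det (e : nat) (c : int) (M : 'M[int]_2) (x y : int) :
  eqmodv e ((1 + c *: M) *m vec2 x y) (vec2 x y) ->
  ~~ (2 %| x)%Z || ~~ (2 %| y)%Z -> (2 ^+ e %| c * \det M)%Z.
Proof.
move=> fixed xy_odd.
have dvd_Mcv i : (2 ^+ e %| (M *m (c *: vec2 x y)) i ord0)%Z.
  move/eqP: (fixed i); rewrite eqz_mod_dvd mod2eE mulmxDl mul1mx mxE.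
  by rewrite addrAC subrr add0r -scalemxAl scalemxAr.
have := dvdz_det_mulmx dvd_Mcv.
case/orP: xy_odd => [x_odd /(_ 0) | y_odd /(_ 1)];
  rewrite !mxE /= mulrA [_ * c]mulrC; exact: dvdz_pow2_odd.
Qed.

Lemma catC_fixed_dvdz (p q : int) e x y :
  eqmodv e (catC p q *m vec2 x y) (vec2 x y) ->
  (2 ^+ e %| p * y)%Z /\ (2 ^+ e %| q * x)%Z.
Proof.
move=> fixed; move/eqP: (fixed 0); move/eqP: (fixed 1).
rewrite !eqz_mod_dvd mod2eE !mulmx22E !mxE /= => dvd1 dvd0.
have dvd_py : (2 ^+ e %| p * y)%Z by move: dvd0; congr (_ %| _)%Z; ring.
split=> //.
have -> : q * x = q * x + (1 + p * q) * y - y - q * (p * y) by ring.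
by rewrite rpredB // dvdz_mull.
Qed.

Section CatMap.
Variables p q : nat.
Local Notation C := (catC p%:Z q%:Z).
Local Notation A := (Acat p q).
Local Notation T1 := (T1 p q).

Lemma AcatE : A = p%:Z * q%:Z + 2.
Proof. by rewrite /Acat PoszD PoszM. Qed.

Lemma Gseq_catC n : Gseq A n = \tr (C ^+ n).
Proof. by rewrite mxtrace_exp_Gseq ?det_catC // mxtrace_catC AcatE. Qed.

Lemma catC_sqr : C ^+ 2 = A *: C - 1.
Proof. by rewrite Cayley_Hamilton22 det_catC mxtrace_catC AcatE. Qed.

Lemma catC_T1 : exists M, C ^+ T1 = 1 + 2 *: M.
Proof.
have pE := parityz p; have qE := parityz q.
rewrite /T1; case: ifP => [/andP[p_odd q_odd] | not_both_odd].
  (* C^3 - 1 = (A + 1) (C^2 - C), and A + 1 = p q + 3 is even. *)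
  exists (((p./2)%:Z * (q./2)%:Z * 2 + (p./2)%:Z + (q./2)%:Z + 2) *: (C ^+ 2 - C)).
  rewrite scalerA; apply: matrix22P;
  rewrite !exprS expr0 mulr1 -!mulmxE !mulmx22E !mxE !sum_ord2 !mxE /=;
  by rewrite pE qE p_odd q_odd /=; ring.
case: ifP => [_ | /norP[/negbTE p_even /negbTE q_even]].
  have /dvdzP[k Ak] : (2 %| A)%Z.
    rewrite dvdzE /= dvdn2 oddD oddM addbF.
    by move: not_both_odd; case: (odd p) (odd q) => [] [].
  exists (k *: C - 1); rewrite catC_sqr scalerBr scalerA [2 * k]mulrC -Ak.
  by apply: matrix22P; rewrite !mxE /=; ring.
have p2 : (2 %| p%:Z)%Z by rewrite dvdzE dvdn2 p_even.
have q2 : (2 %| q%:Z)%Z by rewrite dvdzE dvdn2 q_even.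
exists (map_mx (fun z => z %/ 2)%Z (C - 1)).
rewrite expr1 -even_mx; first by rewrite addrC subrK.
move=> i j; rewrite !mxE.
case: (ord2P i) => ->; case: (ord2P j) => -> /=.
- by rewrite subrr.
- by rewrite subr0.
- by rewrite subr0.
- by rewrite addrAC subrr add0r dvdz_mulr.
Qed.

Lemma catC_pow2_T1 l : exists M, C ^+ (2 ^ l * T1) = 1 + 2 ^+ l.+1 *: M.
Proof.
elim: l => [|l [M CM]]; first by rewrite expn0 mul1n expr1; exact: catC_T1.
exists (M + 2 ^+ l *: M ^+ 2).
by rewrite expnS -mulnA mulnC exprM CM sqr_one_add_scale22.
Qed.

Lemma Gseq_pow2_T1_dvdz l : (2 ^+ (l.+1 * 2) %| Gseq A (2 ^ l * T1) - 2)%Z.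
Proof.
have [M CM] := catC_pow2_T1 l.
rewrite Gseq_catC (trace_sub2_det22 _ CM) ?det_exp ?det_catC ?expr1n //.
by rewrite rpredN exprM dvdz_mulr.
Qed.

Lemma T1_gt0 : (0 < T1)%N.
Proof. by rewrite /T1; case: ifP => //; case: ifP. Qed.

Lemma m0_le1 : (m0 p q <= 1)%N.
Proof. by rewrite /m0; case: ifP. Qed.

Lemma m0_eq0_dvdz : m0 p q = 0%N -> (2 ^+ 3 %| Gseq A T1 - 2)%Z.
Proof.
have /dvdzP[w Gw] := Gseq_pow2_T1_dvdz 0; rewrite expn0 mul1n in Gw.
have Gdiv2 : (Gseq A T1 %/ 2)%Z = 2 * w + 1.
  by rewrite -[Gseq A T1](subrK 2) Gw (_ : _ + 2 = (2 * w + 1) * 2) ?mulzK //; ring.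
rewrite /m0 Gdiv2; case: ifP => // /negbFE/eqP w_mod4 _.
have := divz_eq (2 * w + 1) 4; rewrite w_mod4 => w_div4.
apply/dvdzP; exists ((2 * w + 1) %/ 4)%Z; rewrite Gw; lia.
Qed.

Hypotheses (p_gt0 : (0 < p)%N) (q_gt0 : (0 < q)%N).

Lemma Acat_gt2 : 2 < A.
Proof. by rewrite AcatE; nia. Qed.

Lemma e_sg_v2 : (e_sg p q).+1 = v2 (Gseq A (2 ^ m0 p q * T1) - 2).
Proof.
set n := (2 ^ m0 p q * T1)%N.
have n_gt0 : (0 < n)%N by rewrite muln_gt0 expn_gt0 T1_gt0.
have /dvdzP[u Gu] : (2 %| Gseq A n - 2)%Z.
  apply: dvdz_trans (Gseq_pow2_T1_dvdz _).
  by rewrite -[X in (X %| _)%Z]expr1 dvdz_exp2l.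
have u_neq0 : u != 0.
  by apply: contraNneq (Gseq_sub2_neq0 Acat_gt2 n_gt0); rewrite Gu => ->.
rewrite /e_sg -/n Gu v2M // addn1; congr (v2 _).+1.
by rewrite -[Gseq A n](subrK 2) Gu (_ : _ + 2 = (u + 1) * 2) ?mulzK //; ring.
Qed.

Lemma v2_Gseq_pow2_T1_le l :
  (v2 (Gseq A (2 ^ l * T1) - 2) <= e_sg p q + 2 * l + 1)%N.
Proof.
pose h k := v2 (Gseq A (2 ^ k * T1) - 2).
have idx_gt0 k : (0 < 2 ^ k * T1)%N by rewrite muln_gt0 expn_gt0 T1_gt0.
have idx k : (2 ^ k.+1 * T1 = 2 ^ k * T1 * 2)%N by rewrite expnS -mulnA mulnC.
have hS k : (m0 p q <= k)%N -> h k.+1 = (h k + 2)%N.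
  move=> m0_le_k; rewrite /h idx v2_Gseq_double ?Acat_gt2 //.
  case: k m0_le_k => [|k] m0_le_k.
    by rewrite expn0 mul1n; apply: m0_eq0_dvdz; lia.
  by apply: dvdz_trans (Gseq_pow2_T1_dvdz _); rewrite dvdz_exp2l.
have h_m0 k : h (m0 p q + k)%N = (e_sg p q + 1 + 2 * k)%N.
  elim: k => [|k IHk]; first by rewrite muln0 !addn0 addn1 e_sg_v2.
  by rewrite addnS hS ?leq_addr // IHk; lia.
have := m0_le1; case: (leqP (m0 p q) l) => [m0_le_l | l_lt_m0] m0_le1.
  by rewrite -(subnKC m0_le_l) -/(h _) h_m0; lia.
have [-> m0_1] : l = 0%N /\ m0 p q = 1%N by lia.
have := h_m0 0; rewrite m0_1 => h1.
have := v2_Gseq_double_ge Acat_gt2 (idx_gt0 0); rewrite -idx -/(h 0) -/(h 1) h1; lia.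
Qed.

End CatMap.

Theorem lemma8 (p q s Tc lc : nat) :
  (0 < p)%N -> (0 < q)%N ->
  least_period p%:Z q%:Z `|e_s p q|%N (2 ^ s * T1 p q)%N ->
  (Tc = 1%N \/ (Tc = (2 ^ lc * T1 p q)%N /\ (lc <= s + 1)%N)) ->
  forall e : nat, e_0 p q Tc lc < e%:Z ->
  forall x y : int, on_cycle p%:Z q%:Z e (vec2 x y) Tc ->
  (2 %| x)%Z /\ (2 %| y)%Z.
Proof.
move=> p_gt0 q_gt0 _ Tc_shape e e0_lt_e x y [_ fixed _].
apply/andP; apply: contraTT isT; rewrite negb_and => xy_odd.
have [Tc1 | Tc_neq1] := eqVneq Tc 1%N.
  move: fixed e0_lt_e; rewrite Tc1 expr1 /e_0 eqxx.
  case/catC_fixed_dvdz => dvd_py dvd_qx e0_lt_e.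
  rewrite /e_p /e_q in e0_lt_e.
  case/orP: xy_odd => [x_odd | y_odd].
    have := dvdz_pow2_odd x_odd dvd_qx; rewrite dvdz_v2 /v2 /=; lia.
  have := dvdz_pow2_odd y_odd dvd_py; rewrite dvdz_v2 /v2 /=; lia.
case: Tc_shape => [Tc1 | [Tc_def _]]; first by rewrite Tc1 eqxx in Tc_neq1.
have [M CM] := catC_pow2_T1 p q lc; rewrite -Tc_def in CM.
rewrite CM in fixed; have dvd_det := cycle_dvdz_det fixed xy_odd.
have dvd_G : (2 ^+ (lc.+1 + e) %| Gseq (Acat p q) Tc - 2)%Z.
  rewrite Gseq_catC (trace_sub2_det22 _ CM) ?det_exp ?det_catC ?expr1n //.
  by rewrite rpredN exprD expr2 -mulrA dvdz_mul.
have Tc_gt0 : (0 < Tc)%N by rewrite Tc_def muln_gt0 expn_gt0 T1_gt0.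
move: dvd_G; rewrite dvdz_v2 ?Gseq_sub2_neq0 ?Acat_gt2 // Tc_def.
have := v2_Gseq_pow2_T1_le p_gt0 q_gt0 lc.
move: e0_lt_e; rewrite /e_0 (negbTE Tc_neq1); case: eqP; lia.
Qed.
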